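(* Let $F$ be an infinite field of characteristic different from $2$, let $S$ be an étale $F$-algebra with an involution $\sigma$, let $S_0=S^\sigma$, and suppose $\dim_F S=2n$ (so $\dim_FS_0=n$). Then: (1) there exists an invertible element $x\in S$ such that $x$ generates $S$ as an $F$-algebra and $x^2$ generates $S_0$; (2) there exists a polynomial $f_n(x)=x^n+a_{n-1}x^{n-1}+\dots+a_1x+a_0\in F[x]$ such that $S_0\cong F[x]/(f_n(x))$ and $S\cong F[x]/(f_{2n}(x))$, where $f_{2n}(x)=f_n(x^2)$; (3) for such a polynomial $f_n$, the algebra $S$ has trivial discriminant if and only if $(-1)^na_0$ is a square in $F$.
   Context: An étale $F$-algebra is a finite-dimensional commutative $F$-algebra $S$ with $S\otimes_FF_s\cong F_s^m$ for a separable closure $F_s$. An involution of $S$ is an $F$-algebra automorphism $\sigma$ of order $2$ such that the inclusion $S^\sigma\subset S$ of the fixed subalgebra makes $S$ a quadratic étale extension (free of rank $2$) of $S^\sigma$. The discriminant $\Delta(S)$ is the quadratic étale $F$-algebra corresponding to the two-element $\Gamma$-set of $\mathfrak A_{2n}$-orbits of orderings of $\mathrm{Hom}_{F\text{-alg}}(S,F_s)$; $S$ has trivial discriminant if $\Delta(S)\cong F\times F$ (equivalently, in characteristic $\ne2$, the usual discriminant is a square). *)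

From HB Require Import structures.
From mathcomp Require Import all_boot all_order all_algebra all_field.
Set Implicit Arguments. Unset Strict Implicit. Unset Printing Implicit Defensive.
Import GRing.Theory.
Local Open Scope ring_scope.

Section EtaleDefs.
Variable F : fieldType.

Definition aeval (S : falgType F) (p : {poly F}) (y : S) : S :=
  (map_poly (in_alg S) p).[y].

Definition falg_hom (S : falgType F) (K : fieldType) (iota : {rmorphism F -> K})
    (phi : S -> K) : Prop :=
  [/\ forall a b : S, phi (a + b) = phi a + phi b,
      forall a b : S, phi (a * b) = phi a * phi b,
      phi 1 = 1 &
      forall (c : F) (a : S), phi (c *: a) = iota c * phi a].

(* Etale F-algebra: finite-dimensional commutative F-algebra S such that
   S (x)_F K ~= K^m (m = dim S) as K-algebras for a field extension K of F.
   A K-algebra map S (x)_F K -> K^m is the same as m F-algebra maps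
   phi_i : S -> K, and it is an isomorphism iff the matrix (phi_i(e_j))
   (e a basis of S) is invertible. *)
Definition etale (S : falgType F) : Prop :=
  (forall a b : S, a * b = b * a) /\
  exists (K : fieldType) (iota : {rmorphism F -> K})
         (phi : 'I_(\dim {:S}) -> S -> K),
    (forall i, falg_hom iota (phi i)) /\
    \det (\matrix_(i, j) phi i (vbasis {:S})`_j) != 0.

(* Involution: F-algebra automorphism of order 2 such that S is free of rank 2
   over the fixed subalgebra S^sigma. *)
Definition involution (S : falgType F) (sigma : 'AEnd(S)) : Prop :=
  [/\ forall x : S, sigma (sigma x) = x,
      exists x : S, sigma x != x &
      exists u v : S,
        (forall s : S, exists a b : S,
            [/\ a \in fixedSpace sigma, b \in fixedSpace sigma & s = a * u + b * v]) /\
        (forall a b : S, a \in fixedSpace sigma -> b \in fixedSpace sigma ->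
            a * u + b * v = 0 -> a = 0 /\ b = 0)].

(* U (a subalgebra of S) is isomorphic, as an F-algebra, to F[x]/(f):
   there is y in U such that p |-> p(y) maps F[x] onto U with kernel (f). *)
Definition iso_poly_quot (S : falgType F) (U : {vspace S}) (f : {poly F}) : Prop :=
  exists y : S, [/\ y \in U,
    forall p : {poly F}, aeval p y = 0 <-> f %| p &
    forall s : S, s \in U -> exists p : {poly F}, aeval p y = s].

Definition trace_alg (S : falgType F) (s : S) : F :=
  \sum_(i < \dim {:S}) coord (vbasis {:S}) i (s * (vbasis {:S})`_i).

Definition trace_disc (S : falgType F) : F :=
  \det (\matrix_(i < \dim {:S}, j < \dim {:S})
          trace_alg ((vbasis {:S})`_i * (vbasis {:S})`_j)).

Definition trivial_discriminant (S : falgType F) : Prop :=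
  exists c : F, trace_disc S = c ^+ 2.

End EtaleDefs.

(* Over a field K splitting S, etaleness provides F-algebra maps phi_1, ..., phi_2n
   from S to K whose matrix on a basis is invertible: they separate points and are
   pairwise distinct, the trace of S is their sum, and disc(S) = det(phi_i(e_j))^2.
   Freeness of S over S0 makes the anti-invariant part S1 equal to S0 t for a unit
   t, so the phi_i stay distinct and nonzero on S1; as F is infinite one anti-invariant
   x has pairwise distinct nonzero images.  Then the powers of x are free
   (Vandermonde), so x generates S, and x^2 generates S0 because S0 and S0 x are
   independent, whence dim S0 <= n.
   For (3), a generator y with minimal polynomial f(X^2) has as images the 2n roots
   of f(X^2), a set stable under negation; so the traces of odd powers of y vanish
   and the trace form is block diagonal in the basis of even then odd powers. *)

From HB Require Import structures.
From mathcomp Require Import all_boot all_order all_algebra all_field.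
From mathcomp Require Import ring zify.
Set Implicit Arguments. Unset Strict Implicit. Unset Printing Implicit Defensive.
Import GRing.Theory.
Local Open Scope ring_scope.

Lemma det_castmx (R : comNzRingType) n n' (eq_n : n = n') (A : 'M[R]_n) :
  \det (castmx (eq_n, eq_n) A) = \det A.
Proof. by case: n' / eq_n; rewrite castmx_id. Qed.

Lemma det_companionmx (R : comNzRingType) (p : {poly R}) : p \is monic ->
  \det (companionmx p) = (-1) ^+ (size p).-1 * p`_0.
Proof.
move=> p_monic; have := char_poly_det (companionmx p); rewrite companionmxK // => ->.
by rewrite mulrA -exprMn mulrNN mulr1 expr1n mul1r.
Qed.

Lemma size_comp_polyX2 (R : idomainType) (p : {poly R}) : p \is monic ->
  size (p \Po 'X^2) = ((size p).-1 * 2).+1.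
Proof.
move=> p_monic; have p_neq0 : p != 0 := monic_neq0 p_monic.
have lead1 : (p \Po 'X^2)`_((size p).-1 * 2) = 1.
  rewrite coef_comp_poly_Xn // dvdn_mull // mulnK //.
  by move/monicP: p_monic; rewrite lead_coefE.
have pX2_neq0 : p \Po 'X^2 != 0 by apply: contra_eq_neq lead1 => ->; rewrite coef0 eq_sym oner_neq0.
have := size_comp_poly p 'X^2; rewrite size_polyXn /= => <-.
by rewrite prednK // size_poly_gt0.
Qed.

Lemma size_sumMXn (R : semiRingType) N M (c : 'I_M -> R) (g : 'I_M -> nat) :
  (forall i, g i < N)%N -> (size ((\sum_i c i *: 'X^(g i))%R : {poly R}) <= N)%N.
Proof.
move=> gN; apply/leq_sizeP => j le_N_j; rewrite coef_sumMXn big1 // => i /eqP gij.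
by move: (gN i); rewrite gij ltnNge le_N_j.
Qed.

Lemma lreg_unit (F : fieldType) (S : falgType F) (x : S) :
  (forall a b : S, a * b = b * a) -> (forall s, x * s = 0 -> s = 0) ->
  x \is a GRing.unit.
Proof.
move=> mulSC x_reg.
have : lker (amull x) == 0%VS.
  apply/lker0P => a b; rewrite !lfunE /= => eq_ab; apply/eqP; rewrite -subr_eq0.
  by apply/eqP/x_reg; rewrite mulrBr eq_ab subrr.
move/lker0_limgf => im_full; have : (1 : S) \in limg (amull x) by rewrite im_full memvf.
case/memv_imgP => s _; rewrite lfunE /= => xs1.
by apply/unitrP; exists s; rewrite mulSC -xs1.
Qed.

Lemma memv_agenvX (F : fieldType) (S : falgType F) (y : S) j : y ^+ j \in agenv <[y]>%VS.
Proof. by apply: (subvP (subX_agenv _ j)); rewrite expv_line memv_line. Qed.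

Section PolynomialEvaluation.
Variables (F : fieldType) (S : falgType F).
Implicit Types (p q : {poly F}) (y : S).

Lemma aevalE p y : aeval p y = horner_alg y p.
Proof. by []. Qed.

Lemma aevalM p q y : aeval (p * q) y = aeval p y * aeval q y.
Proof. by rewrite !aevalE rmorphM. Qed.

Lemma aevalXn y k : aeval 'X^k y = y ^+ k.
Proof. by rewrite aevalE rmorphXn /= horner_algX. Qed.

Lemma aeval_sumMXn M (c : 'I_M -> F) (g : 'I_M -> nat) y :
  aeval (\sum_i c i *: 'X^(g i)) y = \sum_i c i *: y ^+ g i.
Proof.
rewrite aevalE linear_sum; apply: eq_bigr => i _.
by rewrite linearZ /= -aevalE aevalXn mulr_algl.
Qed.

Lemma aeval_wide N p y : (size p <= N)%N ->
  aeval p y = \sum_(i < N) p`_i *: y ^+ i.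
Proof.
move=> le_p_N; rewrite /aeval (@horner_coef_wide _ N); last first.
  by apply: leq_trans le_p_N; exact: size_poly.
by apply: eq_bigr => i _; rewrite coef_map /= mulr_algl.
Qed.

Lemma aeval_comp p q y : aeval (p \Po q) y = aeval p (aeval q y).
Proof.
rewrite [RHS](aeval_wide (N := size p)) // aevalE comp_polyE linear_sum /=.
by apply: eq_bigr => i _; rewrite linearZ /= rmorphXn mulr_algl.
Qed.

Definition free_family N (b : 'I_N -> S) : Prop :=
  forall c : 'I_N -> F, \sum_i c i *: b i = 0 -> forall i, c i = 0.

Lemma free_family_tuple N (b : 'I_N -> S) : free_family b -> free [tuple b i | i < N].
Proof.
move=> b_free; apply/freeP => c c0 i; apply: (b_free c _ i).
by rewrite -[RHS]c0; apply: eq_bigr => j _; rewrite -tnth_nth tnth_mktuple.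
Qed.

Lemma free_family_dim N (b : 'I_N -> S) (U : {vspace S}) :
  (forall i, b i \in U) -> free_family b -> (N <= \dim U)%N.
Proof.
move=> bU /free_family_tuple/eqnP; rewrite size_tuple => <-; apply: dimvS.
by apply/span_subvP => s /mapP [i _ ->].
Qed.

Lemma free_family_span N (b : 'I_N -> S) (U : {vspace S}) :
  (forall i, b i \in U) -> (\dim U <= N)%N -> free_family b ->
  forall s, s \in U -> exists c : 'I_N -> F, s = \sum_i c i *: b i.
Proof.
move=> bU dimU b_free s sU.
have b_basis : basis_of U [tuple b i | i < N].
  rewrite basisEfree free_family_tuple // size_tuple dimU andbT.
  by apply/span_subvP => t /mapP [i _ ->].
exists (coord [tuple b i | i < N] ^~ s); rewrite {1}(coord_basis b_basis sU).
by apply: eq_bigr => i _; rewrite -tnth_nth tnth_mktuple.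
Qed.

Definition powers_free y N : Prop :=
  forall p, (size p <= N)%N -> aeval p y = 0 -> p = 0.

Lemma powers_free_family y N : powers_free y N ->
  forall M (g : 'I_M -> nat), injective g -> (forall i, g i < N)%N ->
  free_family (fun i => y ^+ g i).
Proof.
move=> y_free M g g_inj gN c c0.
pose p := \sum_i c i *: 'X^(g i) : {poly F}.
have p0 : p = 0 by apply: y_free; [exact: size_sumMXn | rewrite aeval_sumMXn].
move=> i; have : p`_(g i) = 0 by rewrite p0 coef0.
rewrite coef_sumMXn (bigD1 i) //= big1 ?addr0 // => j /andP [/eqP/g_inj -> ].
by rewrite eqxx.
Qed.

Lemma family_powers_free y N : free_family (fun j : 'I_N => y ^+ j) -> powers_free y N.
Proof.
move=> y_free p le_p_N py0; apply/polyP => j; rewrite coef0.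
have [lt_j_N | ] := ltnP j N; last by move/leq_sizeP: le_p_N; apply.
by apply: (y_free (fun i => p`_i) _ (Ordinal lt_j_N)); rewrite -aeval_wide.
Qed.

Lemma powers_free_sqr y N : powers_free y N.*2 -> powers_free (y ^+ 2) N.
Proof.
move=> y_free p le_p_N py0.
have pX2_0 : p \Po 'X^2 = 0.
  apply: y_free; last by rewrite aeval_comp aevalXn.
  apply/leq_sizeP => j le_j; rewrite coef_comp_poly_Xn //.
  case: ifP => // /dvdnP [k def_j]; rewrite def_j mulnK //.
  by apply/(leq_sizeP _ _ le_p_N); rewrite def_j -muln2 leq_pmul2r in le_j.
apply/polyP => i; rewrite coef0.
by have := coef_comp_poly_Xn p (i * 2) (isT : (0 < 2)%N); rewrite dvdn_mull // mulnK // pX2_0 coef0.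
Qed.

Lemma aeval_eq0_dvdp y f : f != 0 -> aeval f y = 0 ->
  powers_free y (size f).-1 -> forall p, aeval p y = 0 <-> f %| p.
Proof.
move=> f_neq0 fy0 y_free p; split => [py0 | ]; last first.
  by rewrite dvdp_eq => /eqP ->; rewrite aevalM fy0 mulr0.
apply/modp_eq0P; apply: y_free; first by rewrite -ltnS prednK ?size_poly_gt0 // ltn_modp.
by move: py0; rewrite {1}(divp_eq p f) aevalE rmorphD /= -!aevalE aevalM fy0 mulr0 add0r.
Qed.

End PolynomialEvaluation.

Section InfiniteField.
Variables (F K : fieldType) (iota : {rmorphism F -> K}).
Hypothesis F_infinite : forall s : seq F, exists x : F, x \notin s.

Lemma exists_uniq_seq N : exists L : seq F, uniq L /\ size L = N.
Proof.
elim: N => [|N [L [L_uniq <-]]]; first by exists [::].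
by have [x xL] := F_infinite L; exists (x :: L); rewrite /= xL L_uniq.
Qed.

Lemma exists_nonroot (p : {poly K}) : p != 0 -> exists c : F, ~~ root p (iota c).
Proof.
move=> p_neq0; have [L [L_uniq sizeL]] := exists_uniq_seq (size p).
have [/hasP [c _ pc] | /hasPn all_roots] := boolP (has (fun c => ~~ root p (iota c)) L).
  by exists c.
have roots_L : all (root p) (map iota L).
  by apply/allP => _ /mapP [c cL ->]; have := all_roots c cL; rewrite negbK.
have := max_poly_roots p_neq0 roots_L.
by rewrite size_map sizeL ltnn (map_inj_uniq (fmorph_inj iota)) L_uniq => /(_ isT).
Qed.

Lemma exists_nonvanishing_comb (V : lmodType F) (I : finType)
    (psi : I -> V -> K) (w : I -> V) :
  (forall i c a b, psi i (c *: a + b) = iota c * psi i a + psi i b) ->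
  (forall i, psi i (w i) != 0) ->
  exists c : F, forall i, psi i (\sum_j c ^+ enum_rank j *: w j) != 0.
Proof.
move=> psi_lin psi_w.
have psi0 i : psi i 0 = 0.
  have := psi_lin i 1 0 0; rewrite scale1r addr0 rmorph1 mul1r => psi00.
  by apply/esym/(addrI (psi i 0)); rewrite addr0 -psi00.
(* psi i of the combination is a polynomial in c whose coefficient of degree
   enum_rank i is psi i (w i) != 0; choose c off the roots of their product. *)
have psi_sum i c : psi i (\sum_j c ^+ enum_rank j *: w j) =
    \sum_j psi i (w j) * iota c ^+ enum_rank j.
  elim/big_rec2: _ => [|j y s _ <-]; first exact: psi0.
  by rewrite psi_lin rmorphXn mulrC.
pose Q i : {poly K} := \sum_j psi i (w j) *: 'X^(enum_rank j).
have Q_neq0 i : Q i != 0.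
  apply: contra_neq (psi_w i) => Qi0; have := congr1 (coefp (enum_rank i)) Qi0.
  rewrite /= coef0 coef_sumMXn => <-.
  by rewrite (big_pred1 i) // => j /=; rewrite (inj_eq (@ord_inj _)) (inj_eq enum_rank_inj).
have [c Pc] : exists c, ~~ root (\prod_i Q i) (iota c).
  by apply: exists_nonroot; apply/prodf_neq0 => i _.
exists c => i; rewrite psi_sum.
move: Pc; rewrite /root horner_prod => /prodf_neq0/(_ i isT).
by rewrite horner_sum; under eq_bigr do rewrite hornerZ hornerXn.
Qed.

End InfiniteField.

Section EtaleAlgebra.
Variables (F : fieldType) (S : falgType F) (K : fieldType) (iota : {rmorphism F -> K}).
Variable phi : 'I_(\dim {:S}) -> S -> K.
Hypothesis phi_hom : forall i, falg_hom iota (phi i).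
Hypothesis det_phi_neq0 : \det (\matrix_(i, j) phi i (vbasis {:S})`_j) != 0.

Local Notation m := (\dim {:S}).
Local Notation e := (vbasis {:S}).
Local Notation M := (\matrix_(i, j) phi i e`_j).

Section PhiMorphism.
Variable i : 'I_m.

Fact phi_is_zmod_morphism : zmod_morphism (phi i).
Proof.
have [phiD _ _ phiZ] := phi_hom i => a b.
by rewrite -scaleN1r phiD phiZ rmorphN1 mulN1r.
Qed.
HB.instance Definition _ := GRing.isZmodMorphism.Build S K (phi i) phi_is_zmod_morphism.

Fact phi_is_monoid_morphism : monoid_morphism (phi i).
Proof. by have [_ phiM phi1 _] := phi_hom i. Qed.
HB.instance Definition _ := GRing.isMonoidMorphism.Build S K (phi i) phi_is_monoid_morphism.

End PhiMorphism.

Lemma phiZ i c s : phi i (c *: s) = iota c * phi i s.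
Proof. by case: (phi_hom i). Qed.

Lemma phi_coordE i s : phi i s = \sum_j iota (coord e j s) * M i j.
Proof.
rewrite {1}(coord_vbasis (memvf s)) rmorph_sum /=; apply: eq_bigr => j _.
by rewrite phiZ mxE.
Qed.

Lemma phi_aeval i (p : {poly F}) (y : S) : phi i (aeval p y) = (map_poly iota p).[phi i y].
Proof.
rewrite (aeval_wide (N := size p)) // rmorph_sum /= horner_coef size_map_poly.
by apply: eq_bigr => k _; rewrite phiZ rmorphXn coef_map.
Qed.

Lemma phi_eq0 s : (forall i, phi i s = 0) -> s = 0.
Proof.
move=> phi_s0; pose cs : 'cV_m := \col_j iota (coord e j s).
have Mcs0 : M *m cs = 0.
  apply/colP => i; rewrite !mxE -[RHS](phi_s0 i) phi_coordE.
  by apply: eq_bigr => j _; rewrite !mxE mulrC.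
have cs0 : cs = 0 by rewrite -(mulKmx (_ : M \in unitmx) cs) ?Mcs0 ?mulmx0 // unitmxE unitfE.
rewrite (coord_vbasis (memvf s)) big1 // => j _.
have := congr1 (fun A : 'cV_m => A j 0) cs0; rewrite !mxE => /eqP.
by rewrite fmorph_eq0 => /eqP ->; rewrite scale0r.
Qed.

Lemma phi_distinct i j : i != j -> exists s, phi i s != phi j s.
Proof.
move=> neq_ij; have : [exists k : 'I_m, M i k != M j k].
  apply: contraT; rewrite negb_exists => /forallP eq_rows.
  have := det_phi_neq0; rewrite (determinant_alternate neq_ij) ?eqxx // => k.
  by have := eq_rows k; rewrite negbK => /eqP.
by case/existsP => k; rewrite !mxE => neq_k; exists e`_k.
Qed.

Lemma phi_unit_neq0 i x : x \is a GRing.unit -> phi i x != 0.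
Proof.
move=> x_unit; apply: contra_neq (oner_neq0 K) => phix0.
by rewrite -(rmorph1 (phi i)) -(mulrV x_unit) rmorphM /= phix0 mul0r.
Qed.

Lemma phi_neq0_unit x : (forall a b : S, a * b = b * a) ->
  (forall i, phi i x != 0) -> x \is a GRing.unit.
Proof.
move=> mulSC phi_x; apply: lreg_unit mulSC _ => s xs0; apply: phi_eq0 => i; apply/eqP.
by have := congr1 (phi i) xs0; rewrite rmorphM rmorph0 => /eqP; rewrite mulf_eq0 (negPf (phi_x i)).
Qed.

Lemma etale_reduced (z : S) : z * z = 0 -> z = 0.
Proof.
move=> zz0; apply: phi_eq0 => i; apply/eqP.
by rewrite -[_ == 0]orbb -mulf_eq0 -rmorphM zz0 rmorph0.
Qed.

Lemma distinct_phi_powers_free (y : S) : (forall k l, k != l -> phi k y != phi l y) ->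
  free_family (fun j : 'I_m => y ^+ j).
Proof.
move=> phi_y_inj c c0.
pose a : 'rV[K]_m := \row_k phi k y.
pose r : 'rV[K]_m := \row_j iota (c j).
have rV0 : r *m Vandermonde m a = 0.
  apply/rowP => k; rewrite !mxE.
  transitivity (phi k (\sum_j c j *: y ^+ j)); last by rewrite c0 rmorph0.
  by rewrite rmorph_sum /=; apply: eq_bigr => j _; rewrite !mxE phiZ rmorphXn.
have detV : \det (Vandermonde m a) != 0.
  rewrite det_Vandermonde; apply/prodf_neq0 => i _; apply/prodf_neq0 => l lt_il.
  by rewrite !mxE subr_eq0; apply: phi_y_inj; rewrite neq_ltn lt_il orbT.
have r0 : r = 0 by apply/eqP; apply: contraNT detV => r_neq0; apply/det0P; by exists r.
move=> j; have := congr1 (fun A : 'rV_m => A 0 j) r0; rewrite !mxE.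
by move/eqP; rewrite fmorph_eq0 => /eqP.
Qed.

Lemma trace_alg_phi s : iota (trace_alg s) = \sum_k phi k s.
Proof.
pose A : 'M[K]_m := \matrix_(l, i) iota (coord e l (s * e`_i)).
pose D : 'M[K]_m := diag_mx (\row_k phi k s).
have M_unit : M \in unitmx by rewrite unitmxE unitfE.
have MA : M *m A = D *m M.
  apply/matrixP => k i; rewrite mul_diag_mx !mxE -rmorphM /= phi_coordE.
  by apply: eq_bigr => l _; rewrite !mxE mulrC.
have trA : \tr A = \tr D.
  by rewrite -(mulKmx M_unit A) MA mxtrace_mulC -mulmxA mulmxV // mulmx1.
rewrite /trace_alg rmorph_sum /=.
transitivity (\tr A); first by apply: eq_bigr => i _; rewrite mxE.
by rewrite trA mxtrace_diag; apply: eq_bigr => i _; rewrite mxE.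
Qed.

Lemma trace_alg_sum (I : Type) (r : seq I) (c : I -> F) (G : I -> S) :
  trace_alg (\sum_(j <- r) c j *: G j) = \sum_(j <- r) c j * trace_alg (G j).
Proof.
apply: (fmorph_inj iota); rewrite trace_alg_phi !rmorph_sum /=.
under eq_bigr do rewrite rmorph_sum /=.
rewrite exchange_big; apply: eq_bigr => j _.
by rewrite rmorphM trace_alg_phi mulr_sumr; apply: eq_bigr => k _; rewrite phiZ.
Qed.

Definition trace_form (b : 'I_m -> S) : 'M[F]_m := \matrix_(i, j) trace_alg (b i * b j).
Definition coord_mx (b : 'I_m -> S) : 'M[F]_m := \matrix_(i, l) coord e l (b i).

Lemma det_trace_form_phi (b : 'I_m -> S) :
  iota (\det (trace_form b)) = (\det M * iota (\det (coord_mx b))) ^+ 2.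
Proof.
pose V : 'M[K]_m := \matrix_(k, i) phi k (b i).
have defV : V = M *m (map_mx iota (coord_mx b))^T.
  apply/matrixP => k i; rewrite !mxE phi_coordE.
  by apply: eq_bigr => l _; rewrite !mxE mulrC.
have def_form : map_mx iota (trace_form b) = V^T *m V.
  apply/matrixP => i j; rewrite !mxE trace_alg_phi.
  by apply: eq_bigr => k _; rewrite !mxE rmorphM.
rewrite -det_map_mx def_form det_mulmx det_tr defV det_mulmx det_tr det_map_mx.
by rewrite expr2.
Qed.

Lemma trace_disc_phi : iota (trace_disc S) = \det M ^+ 2.
Proof.
rewrite [trace_disc S](_ : _ = \det (trace_form (fun i => e`_i))) //.
rewrite det_trace_form_phi (_ : coord_mx _ = 1%:M) ?det1 ?rmorph1 ?mulr1 //.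
apply/matrixP => i l; rewrite !mxE coord_free //; exact: (basis_free (vbasisP _)).
Qed.

Lemma trace_disc_neq0 : trace_disc S != 0.
Proof. by rewrite -(fmorph_eq0 iota) trace_disc_phi expf_neq0. Qed.

Lemma det_trace_form (b : 'I_m -> S) :
  \det (trace_form b) = trace_disc S * \det (coord_mx b) ^+ 2.
Proof.
apply: (fmorph_inj iota).
by rewrite det_trace_form_phi rmorphM rmorphXn /= trace_disc_phi exprMn.
Qed.

Lemma det_coord_mx_neq0 (b : 'I_m -> S) : free_family b -> \det (coord_mx b) != 0.
Proof.
move=> b_free; apply/det0P => -[r r_neq0 r0]; move/negP: r_neq0; apply.
have r_coord l : \sum_j r 0 j * coord e l (b j) = 0.
  move/(congr1 (fun A : 'rV_m => A 0 l)): r0; rewrite !mxE => r0l; rewrite -[RHS]r0l.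
  by apply: eq_bigr => j _; rewrite mxE.
apply/eqP/rowP => i; rewrite mxE; apply: (b_free (r 0)) => //.
rewrite (coord_vbasis (memvf (\sum_j r 0 j *: b j))) big1 // => l _.
rewrite linear_sum (eq_bigr (fun j => r 0 j * coord e l (b j))) ?r_coord ?scale0r //.
by move=> j _; rewrite linearZ.
Qed.


Section DiscriminantOfQuotient.
Hypothesis two_neq0 : (2%:R : F) != 0.
Variables (f : {poly F}) (y : S).
Hypothesis f_monic : f \is monic.
Local Notation d := (size f).-1.
Local Notation h := (f \Po 'X^2).
Hypothesis dim_S : m = (d + d)%N.
Hypothesis ker_y : forall p, aeval p y = 0 <-> h %| p.
Hypothesis y_gen : forall s, exists p, aeval p y = s.

Lemma phi_y_inj : injective (fun k => phi k y).
Proof.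
move=> k l /= eq_kl; apply/eqP; apply: contraT => /phi_distinct [s].
by have [p <-] := y_gen s; rewrite !phi_aeval eq_kl eqxx.
Qed.

Lemma size_h : size h = (d * 2).+1.
Proof. exact: size_comp_polyX2. Qed.

Lemma phi_y_root k : root (map_poly iota h) (phi k y).
Proof.
by apply/eqP; rewrite -phi_aeval (_ : aeval h y = 0) ?rmorph0 //; apply/ker_y.
Qed.

Lemma phi_y_opp k : exists l, phi l y = - phi k y.
Proof.
have [/mapP [l _ ->] | notin] := boolP (- phi k y \in map (phi^~ y) (enum 'I_m)).
  by exists l.
exfalso.
have roots_uniq : uniq (- phi k y :: map (phi^~ y) (enum 'I_m)).
  by rewrite /= notin map_inj_uniq ?enum_uniq //; exact: phi_y_inj.
have all_roots : all (root (map_poly iota h)) (- phi k y :: map (phi^~ y) (enum 'I_m)).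
  rewrite /= andbC; apply/andP; split; first by apply/allP => _ /mapP [l _ ->]; exact: phi_y_root.
  move: (phi_y_root k); rewrite /root map_comp_poly map_polyXn !horner_comp !hornerXn.
  by rewrite sqrrN.
have h_neq0 : map_poly iota h != 0 by rewrite map_poly_eq0 -size_poly_eq0 size_h.
have := max_poly_roots h_neq0 all_roots roots_uniq.
by rewrite size_map_poly size_h /= size_map size_enum_ord dim_S muln2 addnn ltnn.
Qed.

Lemma sum_phi_y_odd r : odd r -> \sum_k phi k y ^+ r = 0.
Proof.
move=> odd_r.
pose opp k := odflt k [pick l | phi l y == - phi k y].
have oppE k : phi (opp k) y = - phi k y.
  rewrite /opp; case: pickP => [l /eqP //|] /= none.
  by have [l eq_l] := phi_y_opp k; move: (none l); rewrite eq_l eqxx.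
have opp_inj : injective opp.
  by move=> k l eq_kl; apply: phi_y_inj; apply: oppr_inj; rewrite /= -!oppE eq_kl.
have two_K : (2%:R : K) != 0 by rewrite -(rmorph_nat iota) fmorph_eq0.
have : \sum_k phi k y ^+ r = - \sum_k phi k y ^+ r.
  rewrite [LHS](reindex_inj opp_inj) -sumrN; apply: eq_bigr => k _.
  by rewrite oppE exprNn -signr_odd odd_r mulN1r.
move/eqP; rewrite -subr_eq0 opprK -mulr2n -mulr_natr mulf_eq0 (negPf two_K) orbF.
by move/eqP.
Qed.

Lemma trace_alg_odd r : odd r -> trace_alg (y ^+ r) = 0.
Proof.
move=> odd_r; apply: (fmorph_inj iota); rewrite trace_alg_phi rmorph0.
by rewrite -[RHS](sum_phi_y_odd odd_r); apply: eq_bigr => k _; rewrite rmorphXn.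
Qed.

Lemma y_powers_free : powers_free y d.*2.
Proof.
move=> p size_p py0; apply/eqP; apply: contraT => p_neq0.
have := dvdp_leq p_neq0 ((ker_y p).1 py0).
by rewrite size_h muln2 leqNgt (leq_ltn_trans size_p).
Qed.

(* Exponents of the basis y^0, y^2, ..., y^(2d-2), y^1, y^3, ..., y^(2d-1). *)
Definition eo_exp (j : nat) := if (j < d)%N then j.*2 else (j - d).*2.+1.

Lemma eo_exp_lt (j : 'I_m) : (eo_exp j < d.*2)%N.
Proof. by have := ltn_ord j; rewrite {2}dim_S /eo_exp -!addnn; case: ifP => ? ?; lia. Qed.

Lemma eo_exp_inj : injective (fun j : 'I_m => eo_exp j).
Proof.
move=> j k /=; rewrite /eo_exp => eq_jk; apply/val_inj => /=.
by move: eq_jk; case: ifP => ?; case: ifP => ?; rewrite -!addnn; lia.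
Qed.

Definition trace_even_mx : 'M[F]_d := \matrix_(p, q) trace_alg (y ^+ (p.*2 + q.*2)).
Definition trace_odd_mx : 'M[F]_d := \matrix_(p, q) trace_alg (y ^+ (p.*2.+1 + q.*2.+1)).

Lemma trace_form_eo_block :
  castmx (dim_S, dim_S) (trace_form (fun j => y ^+ eo_exp j)) =
  block_mx trace_even_mx 0 0 trace_odd_mx.
Proof.
apply/matrixP => i j; rewrite castmxE /trace_form mxE -exprD.
rewrite -[i]splitK -[j]splitK; case: (split i) => p; case: (split j) => q.
all: rewrite /= ?(block_mxEul, block_mxEur, block_mxEdl, block_mxEdr) !mxE /eo_exp /=.
all: rewrite ?ltn_ord ?[(_ + _ < _)%N]ltnNge ?leq_addr ?addKn //=.
all: by apply: trace_alg_odd; rewrite oddD /= !odd_double.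
Qed.

Lemma y_expd2 : y ^+ d.*2 = - \sum_(l < d) f`_l *: y ^+ l.*2.
Proof.
have : aeval f (y ^+ 2) = 0 by rewrite -aevalXn -aeval_comp; apply/ker_y.
rewrite (aeval_wide (N := d.+1)); last by rewrite prednK // size_poly_gt0 monic_neq0.
rewrite big_ord_recr /= (_ : f`_d = 1); last by move/monicP: f_monic; rewrite lead_coefE.
rewrite scale1r addrC => /eqP; rewrite addr_eq0 => /eqP.
rewrite -exprM mul2n => ->; congr (- _); apply: eq_bigr => l _.
by rewrite -exprM mul2n.
Qed.

Lemma trace_odd_mxE : trace_odd_mx = companionmx f *m trace_even_mx.
Proof.
apply/matrixP => p q; rewrite !mxE.
under eq_bigr do rewrite [companionmx _ _ _]mxE [trace_even_mx _ _]mxE.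
have [p_last | p_not_last] := eqVneq (p : nat) d.-1.
  rewrite -trace_alg_sum; congr trace_alg.
  have -> : (p.*2.+1 + q.*2.+1 = d.*2 + q.*2)%N.
    by have := ltn_ord p; rewrite p_last -!addnn; lia.
  rewrite exprD y_expd2 mulNr mulr_suml -sumrN; apply: eq_bigr => l _.
  by rewrite -scalerAl -exprD scaleNr.
have lt_p1_d : (p.+1 < d)%N by move: p_not_last (ltn_ord p); lia.
rewrite (bigD1 (Ordinal lt_p1_d)) //= eqxx mul1r big1 ?addr0.
  by congr (trace_alg (y ^+ _)); rewrite -!addnn; lia.
move=> l neq_l; rewrite (_ : (p.+1 == l) = false) ?mul0r //.
by apply: contraNF neq_l => /eqP eq_l; apply/eqP/val_inj.
Qed.

(* In the basis y^(eo_exp j) the trace form is diag(A, C A), C the companion matrix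
   of f, so disc(S) q^2 = det(A)^2 (-1)^d f(0), q the change-of-basis determinant. *)
Lemma trivial_discriminant_quotient :
  trivial_discriminant S <-> exists c, (-1) ^+ d * f`_0 = c ^+ 2.
Proof.
pose q := \det (coord_mx (fun j => y ^+ eo_exp j)).
have q_neq0 : q != 0.
  exact: det_coord_mx_neq0 (powers_free_family y_powers_free eo_exp_inj eo_exp_lt).
have disc_neq0 := trace_disc_neq0.
have disc_q : trace_disc S * q ^+ 2 = \det trace_even_mx ^+ 2 * ((-1) ^+ d * f`_0).
  rewrite -det_trace_form -(det_castmx dim_S) trace_form_eo_block det_ublock.
  by rewrite trace_odd_mxE det_mulmx det_companionmx // mulrCA -expr2 mulrC.
have detA_neq0 : \det trace_even_mx != 0.
  apply: contra_neq (mulf_neq0 disc_neq0 (expf_neq0 2 q_neq0)) => detA0.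
  by rewrite disc_q detA0 expr0n mul0r.
split => [[c disc_c] | [c fc]].
  exists (c * q / \det trace_even_mx); rewrite expr_div_n exprMn -disc_c disc_q.
  by rewrite mulrAC divff ?mul1r // expf_neq0.
exists (\det trace_even_mx * c / q); apply: (mulIf (expf_neq0 2 q_neq0)).
by rewrite disc_q expr_div_n exprMn fc divfK // expf_neq0.
Qed.

End DiscriminantOfQuotient.

Section Involution.
Variable sigma : 'AEnd(S).
Hypothesis sigmaK : forall s, sigma (sigma s) = s.
Hypothesis two_neq0 : (2%:R : F) != 0.

Lemma half_double (s : S) : (2%:R : F)^-1 *: (s + s) = s.
Proof. by rewrite -mulr2n -scaler_nat scalerA mulVf // scale1r. Qed.

Definition fix_part s := (2%:R : F)^-1 *: (s + sigma s).
Definition anti_part s := (2%:R : F)^-1 *: (s - sigma s).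

Lemma fix_partE s : sigma (fix_part s) = fix_part s.
Proof. by rewrite /fix_part linearZ /= linearD /= sigmaK addrC. Qed.

Lemma anti_partE s : sigma (anti_part s) = - anti_part s.
Proof. by rewrite /anti_part linearZ /= linearB /= sigmaK -scalerN opprB. Qed.

Lemma fix_add_anti_part s : fix_part s + anti_part s = s.
Proof. by rewrite -scalerDr addrACA subrr addr0 half_double. Qed.

Lemma fix_part_id s : sigma s = s -> fix_part s = s.
Proof. by rewrite /fix_part => ->; rewrite half_double. Qed.

Lemma anti_part_id s : sigma s = - s -> anti_part s = s.
Proof. by rewrite /anti_part => ->; rewrite opprK half_double. Qed.

Lemma fix_part_anti s : sigma s = - s -> fix_part s = 0.
Proof. by rewrite /fix_part => ->; rewrite subrr scaler0. Qed.

Lemma fixed_anti_eq0 s : sigma s = s -> sigma s = - s -> s = 0.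
Proof.
move=> fix_s; rewrite fix_s => anti_s.
by rewrite -(half_double s) {2}anti_s subrr scaler0.
Qed.

Lemma fix_part_comb a b s t : sigma a = a -> sigma b = b ->
  fix_part (a * s + b * t) = a * fix_part s + b * fix_part t.
Proof.
move=> fix_a fix_b; rewrite /fix_part rmorphD !rmorphM /= fix_a fix_b.
by rewrite -!scalerAr -scalerDr !mulrDr addrACA.
Qed.

Lemma anti_part_comb a b s t : sigma a = a -> sigma b = b ->
  anti_part (a * s + b * t) = a * anti_part s + b * anti_part t.
Proof.
move=> fix_a fix_b; rewrite /anti_part rmorphD !rmorphM /= fix_a fix_b.
by rewrite -!scalerAr -scalerDr !mulrBr opprD addrACA.
Qed.

Section FreeOfRankTwo.
Hypothesis mulSC : forall a b : S, a * b = b * a.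
HB.instance Definition _ := GRing.PzRing_hasCommutativeMul.Build S mulSC.

Variables u v : S.
Hypothesis uv_span : forall s, exists a b,
  [/\ a \in fixedSpace sigma, b \in fixedSpace sigma & s = a * u + b * v].
Hypothesis uv_free : forall a b, a \in fixedSpace sigma -> b \in fixedSpace sigma ->
  a * u + b * v = 0 -> a = 0 /\ b = 0.

Local Notation u0 := (fix_part u).
Local Notation u1 := (anti_part u).
Local Notation v0 := (fix_part v).
Local Notation v1 := (anti_part v).

Lemma fix_part_span_one : exists a b, [/\ sigma a = a, sigma b = b & a * u0 + b * v0 = 1].
Proof.
have [a [b [/fixedSpaceP fix_a /fixedSpaceP fix_b one_ab]]] := uv_span 1.
by exists a, b; rewrite -fix_part_comb // -one_ab fix_part_id ?rmorph1.
Qed.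

(* The determinant of (u, v) in the decomposition S = S0 + S1; it spans S1 over S0. *)
Definition skew_det := u0 * v1 - v0 * u1.
Local Notation t := skew_det.

Lemma skew_det_anti : sigma t = - t.
Proof. by rewrite rmorphB !rmorphM /= !fix_partE !anti_partE /skew_det !mulrN opprK opprB addrC. Qed.

Lemma anti_skew_det w : sigma w = - w -> exists2 c, sigma c = c & w = c * t.
Proof.
move=> anti_w; have [a [b [fix_a fix_b one_ab]]] := fix_part_span_one.
have [x [y [/fixedSpaceP fix_x /fixedSpaceP fix_y def_w]]] := uv_span w.
have w0 : x * u0 + y * v0 = 0 by rewrite -fix_part_comb // -def_w fix_part_anti.
have w1 : w = x * u1 + y * v1 by rewrite -anti_part_comb // -def_w anti_part_id.
exists (a * y - b * x); first by rewrite rmorphB !rmorphM /= fix_a fix_b fix_x fix_y.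
apply/eqP; rewrite -subr_eq0 w1.
have -> : x * u1 + y * v1 - (a * y - b * x) * t =
    (y * v1 + x * u1) * (1 - (a * u0 + b * v0)) + (b * v1 + a * u1) * (x * u0 + y * v0).
  by rewrite /skew_det; ring.
by rewrite one_ab w0 subrr !mulr0 addr0.
Qed.

Lemma fixed_mul_skew_det_eq0 p : sigma p = p -> p * t = 0 -> p = 0.
Proof.
move=> fix_p pt0; have [a [b [fix_a fix_b one_ab]]] := fix_part_span_one.
have [pv0 pu0] : - (p * v0) = 0 /\ p * u0 = 0.
  apply: uv_free; [apply/fixedSpaceP | apply/fixedSpaceP | ].
  - by rewrite rmorphN rmorphM /= fix_p fix_partE.
  - by rewrite rmorphM /= fix_p fix_partE.
  transitivity (- (p * v0) * (u0 + u1) + p * u0 * (v0 + v1)).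
    by rewrite !fix_add_anti_part.
  by rewrite -pt0 /skew_det; ring.
rewrite -[p]mulr1 -one_ab.
have -> : p * (a * u0 + b * v0) = a * (p * u0) - b * (- (p * v0)) by ring.
by rewrite pu0 pv0 !mulr0 subr0.
Qed.

Lemma skew_det_reg s : t * s = 0 -> s = 0.
Proof.
move=> ts0; set p := fix_part s; have fix_p : sigma p = p := fix_partE s.
have [c fix_c def_w] := anti_skew_det (anti_partE s).
have def_s : s = p + c * t by rewrite -def_w fix_add_anti_part.
have e : t * p = - (c * (t * t)).
  by apply/eqP; rewrite -addr_eq0; apply/eqP; rewrite -ts0 def_s; ring.
have tp0 : t * p = 0.
  apply: fixed_anti_eq0; first by rewrite e rmorphN !rmorphM /= fix_c skew_det_anti mulrNN.
  by rewrite rmorphM /= skew_det_anti fix_p mulNr.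
have ctt0 : c * (t * t) = 0 by apply/eqP; rewrite -oppr_eq0 -e tp0.
have ct0 : c * t = 0.
  apply: etale_reduced; have -> : c * t * (c * t) = c * (c * (t * t)) by ring.
  by rewrite ctt0 mulr0.
by rewrite def_s ct0 addr0; apply: fixed_mul_skew_det_eq0; rewrite // mulrC.
Qed.

Lemma skew_det_unit : t \is a GRing.unit.
Proof. exact: lreg_unit mulSC skew_det_reg. Qed.

Lemma phi_anti_distinct k l : k != l -> exists w, sigma w = - w /\ phi k w != phi l w.
Proof.
move=> neq_kl; have [eq_t | ] := eqVneq (phi k t) (phi l t); last by exists t; rewrite skew_det_anti.
have [s neq_s] := phi_distinct neq_kl.
have [eq_s1 | ] := eqVneq (phi k (anti_part s)) (phi l (anti_part s)); last first.
  by exists (anti_part s); rewrite anti_partE.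
exists (fix_part s * t); split; first by rewrite rmorphM /= fix_partE skew_det_anti mulrN.
rewrite !rmorphM /= eq_t; apply: contra neq_s => /eqP eq_s0t.
have eq_s0 : phi k (fix_part s) = phi l (fix_part s).
  by apply: (mulIf (phi_unit_neq0 l skew_det_unit)).
by rewrite -(fix_add_anti_part s) !rmorphD /= eq_s0 eq_s1.
Qed.

Hypothesis F_infinite : forall s : seq F, exists x : F, x \notin s.

Lemma exists_anti_generator : exists x, [/\ sigma x = - x, forall k, phi k x != 0 &
  forall k l, k != l -> phi k x != phi l x].
Proof.
pose psi (kl : 'I_m * 'I_m) s :=
  if kl.1 == kl.2 then phi kl.1 s else phi kl.1 s - phi kl.2 s.
have psi_lin kl c a b : psi kl (c *: a + b) = iota c * psi kl a + psi kl b.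
  by rewrite /psi; case: eqP => _; rewrite !rmorphD /= !phiZ //; ring.
have psi_anti kl : exists w, (sigma w == - w) && (psi kl w != 0).
  rewrite /psi; case: eqVneq => [_ | /phi_anti_distinct [w [anti_w neq_w]]].
    by exists t; rewrite skew_det_anti eqxx phi_unit_neq0 // skew_det_unit.
  by exists w; rewrite anti_w eqxx subr_eq0.
pose w kl := xchoose (psi_anti kl).
have [c psi_c] := exists_nonvanishing_comb F_infinite psi_lin
  (fun kl => (andP (xchooseP (psi_anti kl))).2 : psi kl (w kl) != 0).
exists (\sum_kl c ^+ enum_rank kl *: w kl); split.
- rewrite linear_sum -sumrN; apply: eq_bigr => kl _.
  by rewrite linearZ /= (eqP (andP (xchooseP (psi_anti kl))).1) scalerN.
- by move=> k; have := psi_c (k, k); rewrite /psi eqxx.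
- by move=> k l neq_kl; have := psi_c (k, l); rewrite /psi /= (negPf neq_kl) subr_eq0.
Qed.

End FreeOfRankTwo.

Section AntiGenerator.
Variable n : nat.
Hypothesis dim_S : m = (2 * n)%N.
Variable x : S.
Hypothesis x_anti : sigma x = - x.
Hypothesis phi_x_inj : forall k l, k != l -> phi k x != phi l x.

Local Notation S0 := (fixedSpace sigma).

Lemma anti_generator_powers_free : powers_free x n.*2.
Proof. by rewrite -mul2n -dim_S; apply/family_powers_free/distinct_phi_powers_free. Qed.

Lemma fixed_powers_free : free_family (fun i : 'I_n => (x ^+ 2) ^+ i).
Proof.
exact: (powers_free_family (powers_free_sqr anti_generator_powers_free)
  (g := @nat_of_ord n) (@ord_inj n) (@ltn_ord n)).
Qed.

Lemma memv_fixed_sqr_exp i : (x ^+ 2) ^+ i \in S0.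
Proof. by apply/fixedSpaceP; rewrite !rmorphXn /= x_anti sqrrN. Qed.

Hypothesis x_unit : x \is a GRing.unit.

(* S0 and S0 x are independent subspaces of the same dimension. *)
Lemma dim_fixedSpace : (\dim S0 <= n)%N.
Proof.
have S0x_disjoint : (S0 :&: (S0 * <[x]>) = 0)%VS.
  apply/eqP; rewrite -subv0; apply/subvP => w; rewrite memv_cap => /andP [/fixedSpaceP fix_w].
  case/memv_cosetP => a /fixedSpaceP fix_a def_w; rewrite memv0; apply/eqP.
  by apply: fixed_anti_eq0 => //; rewrite def_w rmorphM /= fix_a x_anti mulrN.
have := dimvS (subvf (S0 + S0 * <[x]>)%VS).
rewrite (dimv_disjoint_sum S0x_disjoint) dim_cosetv_unit // dim_S addnn -mul2n.
by rewrite leq_mul2l.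
Qed.

Lemma agenv_anti_generator : agenv <[x]>%VS = fullv.
Proof.
apply/eqP; rewrite eqEdim subvf /=.
exact: free_family_dim (memv_agenvX x) (distinct_phi_powers_free phi_x_inj).
Qed.

Lemma agenv_anti_generator_sqr : agenv <[x ^+ 2]>%VS = S0.
Proof.
have sub_S0 : (agenv <[x ^+ 2]> <= S0)%VS.
  apply: agenv_sub_modl; first by rewrite -memvE; apply/fixedSpaceP; exact: rmorph1.
  apply/prodvP => a b /vlineP [k ->] b_S0.
  by apply: memvM => //; rewrite memvZ // (memv_fixed_sqr_exp 1).
apply/eqP; rewrite eqEdim sub_S0 /=; apply: leq_trans dim_fixedSpace _.
exact: free_family_dim (memv_agenvX (x ^+ 2)) fixed_powers_free.
Qed.

Lemma iso_poly_quot_anti_generator : exists f : {poly F}, [/\ f \is monic, size f = n.+1,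
  iso_poly_quot S0 f & iso_poly_quot (fullv : {vspace S}) (f \Po 'X^2)].
Proof.
have S0_span := free_family_span memv_fixed_sqr_exp dim_fixedSpace fixed_powers_free.
have [c def_xn] := S0_span _ (memv_fixed_sqr_exp n).
pose g : {poly F} := \sum_i c i *: 'X^(@nat_of_ord n i).
have size_g : (size g <= n)%N := size_sumMXn c (@ltn_ord n).
have size_g_lt : (size (- g) < size ('X^n : {poly F}))%N by rewrite size_polyN size_polyXn ltnS.
pose f := 'X^n - g.
have size_f : size f = n.+1 by rewrite size_polyDl // size_polyXn.
have f_monic : f \is monic by rewrite monicE lead_coefDl // lead_coefXn.
have f_x2 : aeval f (x ^+ 2) = 0.
  by rewrite aevalE rmorphB /= -!aevalE aevalXn aeval_sumMXn -def_xn subrr.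
exists f; split => //.
  exists (x ^+ 2); split; first exact: memv_fixed_sqr_exp 1.
    apply: aeval_eq0_dvdp => //; first exact: monic_neq0.
    by rewrite size_f; exact: powers_free_sqr anti_generator_powers_free.
  by move=> s /S0_span [d ->]; exists (\sum_i d i *: 'X^(@nat_of_ord n i)); exact: aeval_sumMXn.
exists x; split; first exact: memvf.
  apply: aeval_eq0_dvdp.
  - by rewrite -size_poly_eq0 size_comp_polyX2.
  - by rewrite aeval_comp aevalXn.
  - by rewrite size_comp_polyX2 // size_f /= muln2; exact: anti_generator_powers_free.
move=> s _; have [d ->] := free_family_span (fun j => memvf (x ^+ j)) (leqnn _)
  (distinct_phi_powers_free phi_x_inj) (memvf s).
by exists (\sum_i d i *: 'X^(@nat_of_ord m i)); exact: aeval_sumMXn.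
Qed.

End AntiGenerator.
End Involution.
End EtaleAlgebra.

Theorem proposition7p1 (F : fieldType) (S : falgType F) (sigma : 'AEnd(S)) (n : nat) :
  (forall s : seq F, exists x : F, x \notin s) ->
  2 \notin [pchar F] ->
  etale S ->
  involution sigma ->
  \dim {:S} = (2 * n)%N ->
  [/\ (exists x : S, [/\ x \is a GRing.unit,
                         agenv <[x]>%VS = (fullv : {vspace S}) &
                         agenv <[x ^+ 2]>%VS = fixedSpace sigma]),
      (exists f : {poly F}, [/\ f \is monic, size f = n.+1,
                               iso_poly_quot (fixedSpace sigma) f &
                               iso_poly_quot (fullv : {vspace S}) (f \Po 'X^2)]) &
      (forall f : {poly F}, f \is monic -> size f = n.+1 ->
          iso_poly_quot (fixedSpace sigma) f ->
          iso_poly_quot (fullv : {vspace S}) (f \Po 'X^2) ->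
          (trivial_discriminant S <-> exists c : F, (-1) ^+ n * f`_0 = c ^+ 2))].
Proof.
move=> F_infinite charF [mulSC [K [iota [phi [phi_hom det_phi]]]]] [sigmaK _ [u [v [uv_span uv_free]]]] dim_S.
have two_neq0 : (2%:R : F) != 0 by apply: contraNneq charF => two0; rewrite inE /= two0 eqxx.
have [x [x_anti phi_x_neq0 phi_x_inj]] :=
  exists_anti_generator phi_hom det_phi sigmaK two_neq0 mulSC uv_span uv_free F_infinite.
have x_unit := phi_neq0_unit phi_hom det_phi mulSC phi_x_neq0.
split.
- exists x; split => //; first exact: agenv_anti_generator phi_x_inj.
  exact: (agenv_anti_generator_sqr phi_hom two_neq0 dim_S x_anti phi_x_inj x_unit).
- exact: (iso_poly_quot_anti_generator phi_hom two_neq0 dim_S x_anti phi_x_inj x_unit).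
move=> f f_monic size_f _ [y [_ ker_y y_gen]].
have dim_S' : \dim {:S} = ((size f).-1 + (size f).-1)%N by rewrite dim_S size_f addnn mul2n.
have := trivial_discriminant_quotient phi_hom det_phi two_neq0 f_monic dim_S' ker_y (fun s => y_gen s (memvf s)).
by rewrite size_f.
Qed.
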